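(* Let $v=(x,y,z)\in S$ be a point with at least one irrational coordinate. Then $G^k(v)\ne(0,0,0)$ for all $k\ge0$, so its itinerary is defined, and: the itinerary of $v$ consists only of symbols of type $\mathbb{A}$ if and only if $y=z=0$. Moreover, if the itinerary is $\mathbb{A}_{a_1},\mathbb{A}_{a_2},\dots$, then $x=[0;a_1,a_2,\dots]$ (regular continued fraction).
   Context: Let $S = \{(x,y,z)\in\mathbb{R}^3 : 0\le z\le y\le x\le 1\}$. For integers $n\ge1$ define $\mathbb{A}_n = \{\frac1{n+1} < x \le \frac1n,\ 0\le z\le y\le 1-nx\}$, $\mathbb{B}_n = \{0\le z\le 1-nx < y \le x\}$, $\mathbb{C}_n = \{1-nx < z \le y \le x \le \frac1n\}$; together with $\{(0,0,0)\}$ they partition $S$. The 3-dimensional Gauss map $G:S\to S$ is $G(0,0,0)=(0,0,0)$, $G(x,y,z)=\left(\frac1x-n,\frac yx,\frac zx\right)$ on $\mathbb{A}_n$, $G(x,y,z)=\left(\frac{1-y}{x}-n+1,\frac{x-y+z}{x},\frac{x-y}{x}\right)$ on $\mathbb{B}_n$, $G(x,y,z)=\left(\frac{1-z}{x}-n+1,\frac{x-z}{x},\frac{y-z}{x}\right)$ on $\mathbb{C}_n$. For a point $v$ whose forward orbit never hits the origin, its itinerary is the sequence $\mathbb{X}_{a_1},\mathbb{X}_{a_2},\dots$ ($\mathbb{X}\in\{\mathbb{A},\mathbb{B},\mathbb{C}\}$, $a_k\ge1$) with $G^{k-1}(v)\in\mathbb{X}_{a_k}$ for all $k\ge1$. 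*)

From Stdlib Require Import Reals Lra QArith Qreals ClassicalEpsilon.
Open Scope R_scope.

Definition pt : Type := (R * R * R)%type.

Definition inS (v : pt) : Prop :=
  let '(x, y, z) := v in 0 <= z /\ z <= y /\ y <= x /\ x <= 1.

Definition inA (n : nat) (v : pt) : Prop :=
  let '(x, y, z) := v in
  (1 <= n)%nat /\ inS v /\ 1 / (INR n + 1) < x /\ x <= 1 / INR n /\
  0 <= z /\ z <= y /\ y <= 1 - INR n * x.

Definition inB (n : nat) (v : pt) : Prop :=
  let '(x, y, z) := v in
  (1 <= n)%nat /\ inS v /\ 0 <= z /\ z <= 1 - INR n * x /\
  1 - INR n * x < y /\ y <= x.

Definition inC (n : nat) (v : pt) : Prop :=
  let '(x, y, z) := v in
  (1 <= n)%nat /\ inS v /\ 1 - INR n * x < z /\ z <= y /\ y <= x /\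
  x <= 1 / INR n.

Definition GA (n : nat) (v : pt) : pt :=
  let '(x, y, z) := v in (1 / x - INR n, y / x, z / x).
Definition GB (n : nat) (v : pt) : pt :=
  let '(x, y, z) := v in ((1 - y) / x - INR n + 1, (x - y + z) / x, (x - y) / x).
Definition GC (n : nat) (v : pt) : pt :=
  let '(x, y, z) := v in ((1 - z) / x - INR n + 1, (x - z) / x, (y - z) / x).

Definition origin : pt := (0, 0, 0).

Definition choose_n (P : nat -> Prop) : nat := epsilon (inhabits 0%nat) P.

(* The 3-dimensional Gauss map.  The index n in each branch is the (unique)
   n with v in the corresponding region; outside S the value is irrelevant. *)
Definition G (v : pt) : pt :=
  if excluded_middle_informative (v = origin) then origin else
  if excluded_middle_informative (exists n, inA n v) then GA (choose_n (fun n => inA n v)) v else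
  if excluded_middle_informative (exists n, inB n v) then GB (choose_n (fun n => inB n v)) v else
  if excluded_middle_informative (exists n, inC n v) then GC (choose_n (fun n => inC n v)) v else
  v.

Definition Giter (k : nat) (v : pt) : pt := Nat.iter k G v.

Definition irrational (r : R) : Prop := ~ (exists q : Q, Q2R q = r).

Fixpoint cf_tail (a : nat -> nat) (s len : nat) : R :=
  match len with
  | O => 0
  | S l => 1 / (INR (a s) + cf_tail a (S s) l)
  end.

(* x = [0; a_0, a_1, ...] : the regular continued fraction converges to x *)
Definition is_cf_value (a : nat -> nat) (x : R) : Prop :=
  (forall k, (1 <= a k)%nat) /\ Un_cv (fun m => cf_tail a 0 m) x.

(** Each branch of [G] is inverted by rational operations, so an orbit that
    starts off the rational lattice never reaches the origin.  Along an orbit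
    of type [A] two consecutive steps send [y] to [y / (1 - n x)] with
    [1 - n x < 1 / (n + 1)], so [y] at least doubles every two steps while
    staying below [1]: hence [y = 0], and [z <= y].  Conversely the segment
    [y = z = 0] is mapped into itself by the ordinary Gauss map.  Finally
    [x_k = 1 / (a_k + x_(k+1))] with [x_k] in [[0, 1]], and two steps of
    [t |-> 1 / (a + t)] contract by a factor [4], so the continued fraction
    converges to [x]. *)
From Stdlib Require Import Reals ZArith QArith Qreals Lra Lia ClassicalEpsilon.
Open Scope R_scope.

Definition rational (r : R) : Prop := exists q : Q, Q2R q = r.

Lemma rational_0 : rational 0.
Proof. exists 0%Q; apply RMicromega.Q2R_0. Qed.

Lemma rational_1 : rational 1.
Proof. exists 1%Q; apply RMicromega.Q2R_1. Qed.

Lemma rational_plus a b : rational a -> rational b -> rational (a + b).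
Proof. intros [p <-] [q <-]; exists (p + q)%Q; apply Q2R_plus. Qed.

Lemma rational_minus a b : rational a -> rational b -> rational (a - b).
Proof. intros [p <-] [q <-]; exists (p - q)%Q; apply Q2R_minus. Qed.

Lemma rational_mult a b : rational a -> rational b -> rational (a * b).
Proof. intros [p <-] [q <-]; exists (p * q)%Q; apply Q2R_mult. Qed.

Lemma rational_inv a : rational a -> rational (/ a).
Proof.
  intros [p <-]; exists (/ p)%Q.
  rewrite RMicromega.Q2R_inv_ext.
  destruct (Qeq_bool p 0) eqn:E; [|reflexivity].
  apply Qeq_bool_eq, Qeq_eqR in E; rewrite E, RMicromega.Q2R_0, Rinv_0; reflexivity.
Qed.

Lemma rational_div a b : rational a -> rational b -> rational (a / b).
Proof. intros; apply rational_mult; [|apply rational_inv]; assumption. Qed.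

Lemma rational_INR n : rational (INR n).
Proof.
  induction n as [|n IH]; [apply rational_0|].
  rewrite S_INR; apply rational_plus; [exact IH | apply rational_1].
Qed.

Ltac rational_closure :=
  repeat first
    [ assumption | apply rational_0 | apply rational_1 | apply rational_INR
    | apply rational_minus | apply rational_plus | apply rational_div
    | apply rational_inv | apply rational_mult ].

Definition rational_point (v : pt) : Prop :=
  let '(x, y, z) := v in rational x /\ rational y /\ rational z.

Lemma rational_origin : rational_point origin.
Proof. repeat split; apply rational_0. Qed.

Lemma rational_point_GA n x y z :
  x <> 0 -> rational_point (GA n (x, y, z)) -> rational_point (x, y, z).
Proof.
  intros Hx (h1 & h2 & h3).
  assert (hx : rational x).
  { assert (hinv : rational (1 / x)).
    { replace (1 / x) with (1 / x - INR n + INR n) by ring; rational_closure. }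
    replace x with (/ (1 / x)) by (field; exact Hx); rational_closure. }
  split; [exact hx|split].
  - replace y with (y / x * x) by (field; exact Hx); rational_closure.
  - replace z with (z / x * x) by (field; exact Hx); rational_closure.
Qed.

Lemma rational_point_GB n x y z :
  x <> 0 -> rational_point (GB n (x, y, z)) -> rational_point (x, y, z).
Proof.
  intros Hx (h1 & h2 & h3).
  assert (hx : rational x).
  { assert (hinv : rational (1 / x)).
    { replace (1 / x) with ((1 - y) / x - INR n + 1 + INR n - (x - y) / x)
        by (field; exact Hx).
      rational_closure. }
    replace x with (/ (1 / x)) by (field; exact Hx); rational_closure. }
  assert (hy : rational y).
  { replace y with ((1 - (x - y) / x) * x) by (field; exact Hx).
    rational_closure. }
  split; [exact hx|split; [exact hy|]].
  replace z with (((x - y + z) / x - (x - y) / x) * x) by (field; exact Hx).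
  rational_closure.
Qed.

Lemma rational_point_GC n x y z :
  x <> 0 -> rational_point (GC n (x, y, z)) -> rational_point (x, y, z).
Proof.
  intros Hx (h1 & h2 & h3).
  assert (hx : rational x).
  { assert (hinv : rational (1 / x)).
    { replace (1 / x) with ((1 - z) / x - INR n + 1 + INR n - (x - z) / x)
        by (field; exact Hx).
      rational_closure. }
    replace x with (/ (1 / x)) by (field; exact Hx); rational_closure. }
  assert (hz : rational z).
  { replace z with ((1 - (x - z) / x) * x) by (field; exact Hx).
    rational_closure. }
  split; [exact hx|split; [|exact hz]].
  replace y with ((y - z) / x * x + z) by (field; exact Hx).
  rational_closure.
Qed.

Lemma inA_bounds n x y z : inA n (x, y, z) ->
  1 <= INR n /\ 0 < x <= 1 /\ INR n * x <= 1 < (INR n + 1) * x /\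
  0 <= z <= y /\ y <= 1 - INR n * x.
Proof.
  intros (Hn & (s1 & s2 & s3 & s4) & H1 & H2 & _ & _ & Hy).
  assert (hn : 1 <= INR n) by (apply (le_INR 1); exact Hn).
  assert (e1 : 1 / (INR n + 1) * (INR n + 1) = 1) by (field; lra).
  assert (e2 : 1 / INR n * INR n = 1) by (field; lra).
  assert (p : 0 < 1 / (INR n + 1)) by (apply Rdiv_lt_0_compat; lra).
  repeat split; nra.
Qed.

Lemma inB_x_neq0 n x y z : inB n (x, y, z) -> x <> 0.
Proof. intros (_ & _ & _ & _ & H & Hyx) ->; rewrite Rmult_0_r in H; lra. Qed.

Lemma inC_x_neq0 n x y z : inC n (x, y, z) -> x <> 0.
Proof. intros (_ & _ & H & Hzy & Hyx & _) ->; rewrite Rmult_0_r in H; lra. Qed.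

Lemma inA_unique n m w : inA n w -> inA m w -> n = m.
Proof.
  destruct w as [[x y] z]; intros Hn Hm.
  apply inA_bounds in Hn; apply inA_bounds in Hm.
  destruct (Nat.lt_total n m) as [h|[h|h]]; [exfalso| exact h |exfalso].
  - assert (INR n + 1 <= INR m) by (rewrite <- S_INR; apply le_INR; lia); nra.
  - assert (INR m + 1 <= INR n) by (rewrite <- S_INR; apply le_INR; lia); nra.
Qed.

Lemma choose_n_spec (P : nat -> Prop) : (exists n, P n) -> P (choose_n P).
Proof. apply epsilon_spec. Qed.

Lemma G_cases w :
  (w = origin /\ G w = origin) \/
  (exists n, inA n w /\ G w = GA n w) \/
  (exists n, inB n w /\ G w = GB n w) \/
  (exists n, inC n w /\ G w = GC n w) \/ G w = w.
Proof.
  unfold G.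
  destruct (excluded_middle_informative (w = origin)); [left; auto|].
  destruct (excluded_middle_informative (exists n, inA n w)) as [h|].
  { right; left; exists (choose_n (fun n => inA n w)).
    split; [exact (choose_n_spec _ h) | reflexivity]. }
  destruct (excluded_middle_informative (exists n, inB n w)) as [h|].
  { do 2 right; left; exists (choose_n (fun n => inB n w)).
    split; [exact (choose_n_spec _ h) | reflexivity]. }
  destruct (excluded_middle_informative (exists n, inC n w)) as [h|].
  { do 3 right; left; exists (choose_n (fun n => inC n w)).
    split; [exact (choose_n_spec _ h) | reflexivity]. }
  do 4 right; reflexivity.
Qed.

Lemma G_inA n w : inA n w -> G w = GA n w.
Proof.
  intros H; unfold G.
  destruct (excluded_middle_informative (w = origin)) as [->|_].
  { apply inA_bounds in H; lra. }
  destruct (excluded_middle_informative (exists n, inA n w)) as [h|h].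
  - rewrite (inA_unique _ _ _ (choose_n_spec _ h) H); reflexivity.
  - exfalso; eauto.
Qed.

Lemma rational_point_of_G w : rational_point (G w) -> rational_point w.
Proof.
  destruct w as [[x y] z].
  destruct (G_cases (x, y, z))
    as [[-> _]|[[n [H ->]]|[[n [H ->]]|[[n [H ->]]| ->]]]]; intros Hrat.
  - exact rational_origin.
  - destruct (inA_bounds _ _ _ _ H) as (_ & [Hx _] & _).
    exact (rational_point_GA n x y z ltac:(lra) Hrat).
  - exact (rational_point_GB n x y z (inB_x_neq0 _ _ _ _ H) Hrat).
  - exact (rational_point_GC n x y z (inC_x_neq0 _ _ _ _ H) Hrat).
  - exact Hrat.
Qed.

Lemma Giter_not_rational v k : ~ rational_point v -> ~ rational_point (Giter k v).
Proof.
  intros Hv; induction k as [|k IH]; [exact Hv|].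
  intros H; apply IH, rational_point_of_G, H.
Qed.

Lemma Giter_neq_origin v k : ~ rational_point v -> Giter k v <> origin.
Proof. intros Hv E; apply (Giter_not_rational v k Hv); rewrite E; exact rational_origin. Qed.

Definition px (v : pt) : R := fst (fst v).
Definition py (v : pt) : R := snd (fst v).

Lemma py_GA_GA n m x y z : inA n (x, y, z) -> 2 * y <= py (GA m (GA n (x, y, z))).
Proof.
  intros H; destruct (inA_bounds _ _ _ _ H) as (Hn & [Hx _] & [_ Hnx] & [Hz Hzy] & Hy).
  unfold py; simpl.
  destruct (Rle_lt_or_eq_dec 0 y) as [Hy_pos| <-]; [lra| |].
  2:{ unfold Rdiv; rewrite !Rmult_0_l; lra. }
  assert (Hgap : 0 < 1 - INR n * x) by lra.
  replace (y / x / (1 / x - INR n)) with (y / (1 - INR n * x)) by (field; lra).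
  assert (Hhalf : 2 * (1 - INR n * x) <= 1) by nra.
  apply Rmult_le_reg_r with (1 - INR n * x); [exact Hgap|].
  replace (y / (1 - INR n * x) * (1 - INR n * x)) with y by (field; lra).
  nra.
Qed.

Lemma py_Giter_A_orbit v :
  (forall k, exists n, inA n (Giter k v)) ->
  forall m, 2 ^ m * py v <= py (Giter (2 * m) v).
Proof.
  intros HA m; induction m as [|m IH].
  - simpl; lra.
  - replace (2 * S m)%nat with (S (S (2 * m))) by lia.
    destruct (HA (2 * m)%nat) as [n Hn], (HA (S (2 * m))) as [n' Hn'].
    change (Giter (S (S (2 * m))) v) with (G (G (Giter (2 * m) v))).
    change (Giter (S (2 * m)) v) with (G (Giter (2 * m) v)) in Hn'.
    rewrite (G_inA _ _ Hn) in Hn' |- *; rewrite (G_inA _ _ Hn').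
    destruct (Giter (2 * m) v) as [[x y] z] eqn:E.
    pose proof (py_GA_GA n n' x y z Hn) as Hstep.
    unfold py in IH, Hstep |- *; simpl in IH, Hstep |- *; lra.
Qed.

Lemma nonpos_of_pow2_bounded y : (forall m, 2 ^ m * y <= 1) -> y <= 0.
Proof.
  intros Hb; apply Rnot_lt_le; intros Hy.
  destruct (Pow_x_infinity 2 ltac:(rewrite Rabs_pos_eq; lra) (2 / y)) as [N HN].
  specialize (HN N (le_n N)); rewrite Rabs_pos_eq in HN by (apply pow_le; lra).
  specialize (Hb N).
  assert (2 / y * y = 2) by (field; lra).
  nra.
Qed.

Lemma A_orbit_on_axis x y z :
  inS (x, y, z) -> (forall k, exists n, inA n (Giter k (x, y, z))) -> y = 0 /\ z = 0.
Proof.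
  intros (Hz & Hzy & _) HA.
  assert (Hy : y <= 0).
  { apply nonpos_of_pow2_bounded; intros m.
    eapply Rle_trans; [apply (py_Giter_A_orbit _ HA m)|].
    destruct (HA (2 * m)%nat) as [n Hn].
    destruct (Giter (2 * m) (x, y, z)) as [[x' y'] z'].
    destruct (inA_bounds _ _ _ _ Hn) as (Hn1 & [Hx _] & _ & _ & Hy').
    unfold py; simpl; nra. }
  split; lra.
Qed.

Lemma exists_inA_axis t : 0 < t <= 1 -> exists n, inA n (t, 0, 0).
Proof.
  intros Ht.
  destruct (archimed (1 / t)) as [Hup1 Hup2].
  set (N := (up (1 / t) - 1)%Z) in *.
  assert (e : 1 / t * t = 1) by (field; lra).
  assert (hN1 : IZR N <= 1 / t) by (unfold N; rewrite minus_IZR; simpl; lra).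
  assert (hN2 : 1 / t < IZR N + 1) by (unfold N; rewrite minus_IZR; simpl; lra).
  assert (hN : (1 <= N)%Z).
  { assert (HNpos : 0 < IZR N) by nra; apply lt_IZR in HNpos; lia. }
  assert (hN' : 1 <= IZR N) by (apply IZR_le; exact hN).
  exists (Z.to_nat N).
  assert (hI : INR (Z.to_nat N) = IZR N) by (rewrite INR_IZR_INZ, Z2Nat.id; [reflexivity|lia]).
  unfold inA, inS; rewrite hI.
  repeat split; try lra; try lia.
  - apply Rmult_lt_reg_r with (IZR N + 1); [lra|].
    replace (1 / (IZR N + 1) * (IZR N + 1)) with 1 by (field; lra); nra.
  - apply Rmult_le_reg_r with (IZR N); [lra|].
    replace (1 / IZR N * IZR N) with 1 by (field; lra); nra.
  - nra.
Qed.

Lemma G_axis t : 0 < t <= 1 -> exists t', G (t, 0, 0) = (t', 0, 0) /\ 0 <= t' <= 1.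
Proof.
  intros Ht; destruct (exists_inA_axis t Ht) as [n Hn].
  destruct (inA_bounds _ _ _ _ Hn) as (_ & _ & [Hnt Hnt'] & _).
  rewrite (G_inA _ _ Hn); unfold GA.
  exists (1 / t - INR n); split.
  - unfold Rdiv; rewrite Rmult_0_l; reflexivity.
  - assert (e : 1 / t * t = 1) by (field; lra); split; nra.
Qed.

Lemma axis_orbit_in_A x :
  0 <= x <= 1 -> ~ rational x -> forall k, exists n, inA n (Giter k (x, 0, 0)).
Proof.
  intros Hx Hirr.
  assert (Hv : ~ rational_point (x, 0, 0)) by (intros [h _]; exact (Hirr h)).
  assert (Hpos : forall k t, Giter k (x, 0, 0) = (t, 0, 0) -> 0 <= t -> 0 < t).
  { intros k t E Ht; destruct (Req_dec t 0) as [->|]; [|lra].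
    exfalso; exact (Giter_neq_origin _ k Hv E). }
  assert (Haxis : forall k, exists t, Giter k (x, 0, 0) = (t, 0, 0) /\ 0 <= t <= 1).
  { induction k as [|k [t [E Ht]]]; [exists x; auto|].
    change (Giter (S k) (x, 0, 0)) with (G (Giter k (x, 0, 0))); rewrite E.
    apply G_axis; split; [exact (Hpos k t E (proj1 Ht)) | apply Ht]. }
  intros k; destruct (Haxis k) as [t [E Ht]]; rewrite E.
  apply exists_inA_axis; split; [exact (Hpos k t E (proj1 Ht)) | apply Ht].
Qed.

Fixpoint cf_tail_with (a : nat -> nat) (s l : nat) (t : R) : R :=
  match l with
  | O => t
  | S l' => 1 / (INR (a s) + cf_tail_with a (S s) l' t)
  end.

Lemma cf_tail_eq_with a s l : cf_tail a s l = cf_tail_with a s l 0.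
Proof. revert s; induction l as [|l IH]; intros s; simpl; [|rewrite IH]; reflexivity. Qed.

Lemma cf_tail_with_of_recurrence a (xs : nat -> R) :
  (forall k, xs k = 1 / (INR (a k) + xs (S k))) ->
  forall l s, xs s = cf_tail_with a s l (xs (s + l)%nat).
Proof.
  intros Hrec l; induction l as [|l IH]; intros s; simpl.
  - rewrite Nat.add_0_r; reflexivity.
  - rewrite Hrec, IH, Nat.add_succ_r; reflexivity.
Qed.

Lemma inv_shift_unit b u : 1 <= b -> 0 <= u -> 0 <= 1 / (b + u) <= 1.
Proof.
  intros Hb Hu.
  assert (e : 1 / (b + u) * (b + u) = 1) by (field; lra).
  assert (0 < 1 / (b + u)) by (apply Rdiv_lt_0_compat; lra).
  split; nra.
Qed.

Lemma cf_tail_with_unit a : (forall k, (1 <= a k)%nat) ->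
  forall l s t, 0 <= t <= 1 -> 0 <= cf_tail_with a s l t <= 1.
Proof.
  intros Ha l; induction l as [|l IH]; intros s t Ht; simpl; [exact Ht|].
  apply inv_shift_unit; [apply (le_INR 1), Ha | apply IH, Ht].
Qed.

Lemma Rabs_div_le u q c : 0 < c <= q -> Rabs u / q <= Rabs u / c.
Proof.
  intros Hq; apply Rmult_le_compat_l; [apply Rabs_pos|].
  apply Rinv_le_contravar; lra.
Qed.

Lemma inv_shift_dist b u u' : 1 <= b -> 0 <= u -> 0 <= u' ->
  Rabs (1 / (b + u) - 1 / (b + u')) <= Rabs (u - u').
Proof.
  intros Hb Hu Hu'.
  replace (1 / (b + u) - 1 / (b + u')) with ((u' - u) / ((b + u) * (b + u')))
    by (field; lra).
  unfold Rdiv; rewrite Rabs_mult, Rabs_inv, (Rabs_pos_eq ((b + u) * (b + u'))) by nra.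
  rewrite <- Rabs_Ropp, Ropp_minus_distr.
  replace (Rabs (u - u')) with (Rabs (u - u') / 1) at 2 by field.
  apply Rabs_div_le; nra.
Qed.

Lemma inv_shift2_dist b c u u' : 1 <= b -> 1 <= c -> 0 <= u -> 0 <= u' ->
  Rabs (1 / (b + 1 / (c + u)) - 1 / (b + 1 / (c + u'))) <= Rabs (u - u') / 4.
Proof.
  intros Hb Hc Hu Hu'.
  assert (Hq : 2 <= b * (c + u) + 1 /\ 2 <= b * (c + u') + 1) by (split; nra).
  replace (1 / (b + 1 / (c + u)) - 1 / (b + 1 / (c + u')))
    with ((u - u') / ((b * (c + u) + 1) * (b * (c + u') + 1)))
    by (field; repeat split; nra).
  unfold Rdiv at 1.
  rewrite Rabs_mult, Rabs_inv, (Rabs_pos_eq ((b * (c + u) + 1) * _)) by nra.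
  apply Rabs_div_le; nra.
Qed.

Lemma cf_tail_with_dist a : (forall k, (1 <= a k)%nat) ->
  forall l s t t', 0 <= t <= 1 -> 0 <= t' <= 1 ->
  Rabs (cf_tail_with a s l t - cf_tail_with a s l t') <= 2 * (1 / 2) ^ l.
Proof.
  intros Ha.
  assert (HA : forall k, 1 <= INR (a k)) by (intros k; apply (le_INR 1), Ha).
  set (P l := forall s t t', 0 <= t <= 1 -> 0 <= t' <= 1 ->
    Rabs (cf_tail_with a s l t - cf_tail_with a s l t') <= 2 * (1 / 2) ^ l).
  enough (HP : forall l, P l /\ P (S l)) by (intros l; apply HP).
  induction l as [|l [IH IHS]].
  - split; intros s t t' Ht Ht'; simpl.
    + apply Rabs_le; lra.
    + eapply Rle_trans; [apply inv_shift_dist; auto; lra|]; apply Rabs_le; lra.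
  - split; [exact IHS|]; intros s t t' Ht Ht'; simpl cf_tail_with.
    eapply Rle_trans; [apply inv_shift2_dist; auto; apply cf_tail_with_unit; auto|].
    specialize (IH (S (S s)) t t' Ht Ht'); simpl pow in *; lra.
Qed.

Lemma cf_tail_cv_of_recurrence a (xs : nat -> R) :
  (forall k, (1 <= a k)%nat) ->
  (forall k, 0 <= xs k <= 1) ->
  (forall k, xs k = 1 / (INR (a k) + xs (S k))) ->
  Un_cv (fun m => cf_tail a 0 m) (xs 0%nat).
Proof.
  intros Ha Hunit Hrec eps Heps.
  destruct (pow_lt_1_zero (1 / 2) ltac:(rewrite Rabs_pos_eq; lra) (eps / 2))
    as [N HN]; [lra|].
  exists N; intros n Hn; unfold R_dist.
  rewrite cf_tail_eq_with, (cf_tail_with_of_recurrence a xs Hrec n 0); simpl.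
  eapply Rle_lt_trans; [apply cf_tail_with_dist; [exact Ha | lra | apply Hunit]|].
  specialize (HN n Hn); rewrite Rabs_pos_eq in HN by (apply pow_le; lra); lra.
Qed.

Lemma inA_index_pos n w : inA n w -> (1 <= n)%nat.
Proof. destruct w as [[x y] z]; intros H; exact (proj1 H). Qed.

Lemma A_itinerary_cf v a :
  (forall k, inA (a k) (Giter k v)) -> is_cf_value a (px v).
Proof.
  intros Ha.
  assert (Hpos : forall k, (1 <= a k)%nat) by (intros k; exact (inA_index_pos _ _ (Ha k))).
  split; [exact Hpos|].
  apply (cf_tail_cv_of_recurrence a (fun k => px (Giter k v)) Hpos).
  - intros k; specialize (Ha k); destruct (Giter k v) as [[x y] z].
    destruct (inA_bounds _ _ _ _ Ha) as (_ & Hx & _); unfold px; simpl; lra.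
  - intros k; specialize (Ha k); simpl.
    rewrite (G_inA _ _ Ha); destruct (Giter k v) as [[x y] z].
    destruct (inA_bounds _ _ _ _ Ha) as (_ & [Hx _] & _).
    unfold px; simpl; field; lra.
Qed.

Theorem mainTheorem14 (x y z : R) :
  inS (x, y, z) ->
  (irrational x \/ irrational y \/ irrational z) ->
  (forall k : nat, Giter k (x, y, z) <> origin) /\
  ((forall k : nat, exists n : nat, inA n (Giter k (x, y, z))) <-> (y = 0 /\ z = 0)) /\
  (forall a : nat -> nat,
     (forall k : nat, inA (a k) (Giter k (x, y, z))) ->
     is_cf_value a x).
Proof.
  intros HS Hirr.
  assert (Hv : ~ rational_point (x, y, z))
    by (intros (hx & hy & hz); destruct Hirr as [h|[h|h]]; auto).
  split; [|split].
  - intros k; exact (Giter_neq_origin _ k Hv).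
  - split; [exact (A_orbit_on_axis x y z HS)|].
    intros [-> ->]; destruct HS as (_ & _ & Hx0 & Hx1).
    apply axis_orbit_in_A; [lra|].
    destruct Hirr as [h|[h|h]]; [exact h | |]; exfalso; exact (h rational_0).
  - intros a Ha; exact (A_itinerary_cf _ a Ha).
Qed.
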